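(* Let $p_0,p_1,p_2$ be positive integers with $\gcd(p_0,p_1,p_2)=1$, and put $n=p_0+p_1+p_2$. Let $E=(\mathbb{Z}/n\mathbb{Z})\times\{0,1,2\}$ and define permutations $\sigma_0,\sigma_1$ of $E$ by $$\sigma_0(m,0)=(m,1),\quad \sigma_0(m,1)=(m,2),\quad \sigma_0(m,2)=(m,0),$$ $$\sigma_1(m,0)=(m-p_1,2),\quad \sigma_1(m,1)=(m-p_2,0),\quad \sigma_1(m,2)=(m-p_0,1),$$ with arithmetic in the first coordinate modulo $n$. Then the permutations $\sigma_0\sigma_1$ and $\sigma_1\sigma_0$ commute.
   Context: These $\sigma_0,\sigma_1$ are the monodromy permutations of the dessin drawn on the rational billiards surface of the triangle with angles $(p_0\pi/n,p_1\pi/n,p_2\pi/n)$, acting on its $3n$ edges labeled $(m,i)$. Products are composition of functions: $(\sigma_0\sigma_1)(e)=\sigma_0(\sigma_1(e))$. *)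

From mathcomp Require Import all_boot all_order all_algebra.
Set Implicit Arguments. Unset Strict Implicit. Unset Printing Implicit Defensive.
Import GRing.Theory.
Local Open Scope ring_scope.

(* Edges (m,i) with m in Z/nZ (n = p0+p1+p2 >= 3, so 'Z_n is Z/nZ) and i in {0,1,2}. *)
Definition edge (p0 p1 p2 : nat) := ('Z_(p0 + p1 + p2) * 'I_3)%type.

Definition i0 : 'I_3 := inord 0.
Definition i1 : 'I_3 := inord 1.
Definition i2 : 'I_3 := inord 2.

Definition sigma0 (p0 p1 p2 : nat) (e : edge p0 p1 p2) : edge p0 p1 p2 :=
  match nat_of_ord e.2 with
  | 0%N => (e.1, i1)
  | 1%N => (e.1, i2)
  | _ => (e.1, i0)
  end.

Definition sigma1 (p0 p1 p2 : nat) (e : edge p0 p1 p2) : edge p0 p1 p2 :=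
  match nat_of_ord e.2 with
  | 0%N => (e.1 - p1%:R, i2)
  | 1%N => (e.1 - p2%:R, i0)
  | _ => (e.1 - p0%:R, i1)
  end.

From mathcomp Require Import all_boot all_order all_algebra.
Import GRing.Theory.

(* Both sigma0 sigma1 and sigma1 sigma0 preserve the second coordinate of an
   edge and translate the first one by an amount depending only on it; two
   such fibrewise translations of (Z/nZ) x {0,1,2} always commute. *)

Local Open Scope ring_scope.

Definition fibre_shift {Z : zmodType} {I : Type} (d : I -> Z) (x : Z * I) :
    Z * I :=
  (x.1 - d x.2, x.2).

Lemma fibre_shiftC (Z : zmodType) (I : Type) (d d' : I -> Z) (x : Z * I) :
  fibre_shift d (fibre_shift d' x) = fibre_shift d' (fibre_shift d x).
Proof. by rewrite /fibre_shift /= addrAC. Qed.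

Definition ord3_case {Z : Type} (a b c : Z) (i : 'I_3) : Z :=
  match nat_of_ord i with 0%N => a | 1%N => b | _ => c end.

Lemma i0_val : nat_of_ord i0 = 0%N. Proof. exact: inordK. Qed.
Lemma i1_val : nat_of_ord i1 = 1%N. Proof. exact: inordK. Qed.
Lemma i2_val : nat_of_ord i2 = 2%N. Proof. exact: inordK. Qed.

Section EdgeShifts.

Variables p0 p1 p2 : nat.

Lemma sigma1_sigma0 (e : edge p0 p1 p2) :
  sigma1 (sigma0 e) = fibre_shift (ord3_case p2%:R p0%:R p1%:R) e.
Proof.
case: e => m [[|[|[|k]]] lt_i3] //;
  rewrite /sigma0 /sigma1 /fibre_shift /= ?i0_val ?i1_val ?i2_val;
  by congr pair; apply: val_inj; rewrite /= ?i0_val ?i1_val ?i2_val.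
Qed.

Lemma sigma0_sigma1 (e : edge p0 p1 p2) :
  sigma0 (sigma1 e) = fibre_shift (ord3_case p1%:R p2%:R p0%:R) e.
Proof.
case: e => m [[|[|[|k]]] lt_i3] //;
  rewrite /sigma0 /sigma1 /fibre_shift /= ?i0_val ?i1_val ?i2_val;
  by congr pair; apply: val_inj; rewrite /= ?i0_val ?i1_val ?i2_val.
Qed.

End EdgeShifts.

(* The positivity and coprimality hypotheses make the dessin a connected
   surface; the commutation holds without them. *)
Theorem lemma1 (p0 p1 p2 : nat) :
  (0 < p0)%N -> (0 < p1)%N -> (0 < p2)%N -> gcdn (gcdn p0 p1) p2 = 1%N ->
  forall e : edge p0 p1 p2,
    (@sigma0 p0 p1 p2 \o @sigma1 p0 p1 p2) ((@sigma1 p0 p1 p2 \o @sigma0 p0 p1 p2) e) =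
    (@sigma1 p0 p1 p2 \o @sigma0 p0 p1 p2) ((@sigma0 p0 p1 p2 \o @sigma1 p0 p1 p2) e).
Proof.
move=> _ _ _ _ e /=.
by rewrite !sigma1_sigma0 !sigma0_sigma1 fibre_shiftC.
Qed.
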